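(* Let $N\ge 2$, let $\rho$ be a density matrix on $\mathbb{C}^N$ and let $n\ge 1$ be an integer. Then $\mathcal{C}(\rho^{\otimes n})\le n\,\mathcal{C}(\rho)$, where $\mathcal{C}(\rho^{\otimes n})$ is computed on the $N^n$-dimensional space $(\mathbb{C}^N)^{\otimes n}$ (so with reference state $\mathbb{I}/N^n=\mathcal{I}^{\otimes n}$ and normalization $1/\log_2(N^n)$).
   Context: For a density matrix $\rho$ (positive semidefinite, trace one) on an $N$-dimensional Hilbert space $\mathcal{H}_N$, $N\ge 2$, let $\mathcal{I}=\mathbb{I}/N$ denote the normalized maximally mixed state. The von Neumann entropy is $S(\rho)=-\mathrm{Tr}[\rho\log_2\rho]$ (with $0\log 0=0$), and the trace distance to $\mathcal{I}$ is $D(\rho,\mathcal{I})=\tfrac12\mathrm{Tr}\sqrt{(\rho-\mathcal{I})^2}=\tfrac12\|\rho-\mathcal{I}\|_1$. The Quantum Statistical Complexity Measure (QSCM) is $\mathcal{C}(\rho)=\frac{1}{\log_2 N}\,S(\rho)\,D(\rho,\mathcal{I})$, where $N$ is the dimension of the space on which $\rho$ acts. *)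

From Stdlib Require Import Reals Lra Lia ClassicalEpsilon.
Open Scope R_scope.

Record C := mkC { Cre : R ; Cim : R }.
Definition RtoC (x : R) : C := mkC x 0.
Definition C0 : C := RtoC 0.
Definition C1 : C := RtoC 1.
Definition Cadd (a b : C) : C := mkC (Cre a + Cre b) (Cim a + Cim b).
Definition Copp (a : C) : C := mkC (- Cre a) (- Cim a).
Definition Cmul (a b : C) : C :=
  mkC (Cre a * Cre b - Cim a * Cim b) (Cre a * Cim b + Cim a * Cre b).
Definition Cconj (a : C) : C := mkC (Cre a) (- Cim a).

Fixpoint Csum (n : nat) (f : nat -> C) : C :=
  match n with
  | O => C0
  | S k => Cadd (Csum k f) (f k)
  end.

(* ---------- square matrices ----------
   A matrix is a function nat -> nat -> C; its dimension n is passed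
   explicitly and only entries with indices < n are meaningful. *)
Definition Mat := nat -> nat -> C.

Definition Meq (n : nat) (A B : Mat) : Prop :=
  forall i j, (i < n)%nat -> (j < n)%nat -> A i j = B i j.
Definition Mid : Mat := fun i j => if Nat.eqb i j then C1 else C0.
Definition Madd (A B : Mat) : Mat := fun i j => Cadd (A i j) (B i j).
Definition Msub (A B : Mat) : Mat := fun i j => Cadd (A i j) (Copp (B i j)).
Definition Mscale (c : C) (A : Mat) : Mat := fun i j => Cmul c (A i j).
Definition Mmul (n : nat) (A B : Mat) : Mat :=
  fun i j => Csum n (fun k => Cmul (A i k) (B k j)).
Definition Madj (A : Mat) : Mat := fun i j => Cconj (A j i).
Definition Mtrace (n : nat) (A : Mat) : C := Csum n (fun i => A i i).
Definition Mdiag (lam : nat -> R) : Mat :=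
  fun i j => if Nat.eqb i j then RtoC (lam i) else C0.

Definition unitary (n : nat) (U : Mat) : Prop :=
  Meq n (Mmul n (Madj U) U) Mid /\ Meq n (Mmul n U (Madj U)) Mid.

Definition density (n : nat) (rho : Mat) : Prop :=
  Meq n (Madj rho) rho /\
  (forall v : nat -> C,
     0 <= Cre (Csum n (fun i => Csum n (fun j =>
                 Cmul (Cconj (v i)) (Cmul (rho i j) (v j)))))) /\
  Mtrace n rho = C1.

(* Kronecker product of an m x m matrix A and an n x n matrix B,
   index (a, b) <-> a * n + b *)
Definition kron (n : nat) (A B : Mat) : Mat :=
  fun i j => Cmul (A (i / n)%nat (j / n)%nat) (B (i mod n)%nat (j mod n)%nat).

Fixpoint tpow (N : nat) (k : nat) (rho : Mat) : Mat :=
  match k with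
  | O => Mid
  | S k' => kron N (tpow N k' rho) rho
  end.

Definition is_mfun (n : nat) (f : R -> R) (A B : Mat) : Prop :=
  exists (U : Mat) (lam : nat -> R),
    unitary n U /\
    Meq n A (Mmul n (Mmul n U (Mdiag lam)) (Madj U)) /\
    Meq n B (Mmul n (Mmul n U (Mdiag (fun i => f (lam i)))) (Madj U)).

Definition mfun (n : nat) (f : R -> R) (A : Mat) : Mat :=
  epsilon (inhabits Mid) (fun B => is_mfun n f A B).

Definition log2 (x : R) : R := ln x / ln 2.

Definition eta (t : R) : R := if Req_EM_T t 0 then 0 else - (t * log2 t).

(* von Neumann entropy S(rho) = - Tr[rho log2 rho] = Tr[eta(rho)] *)
Definition vN_entropy (n : nat) (rho : Mat) : R :=
  Cre (Mtrace n (mfun n eta rho)).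

Definition maxmixed (n : nat) : Mat := Mscale (RtoC (/ INR n)) Mid.

Definition trace_dist (n : nat) (rho sigma : Mat) : R :=
  / 2 * Cre (Mtrace n (mfun n sqrt
                (Mmul n (Msub rho sigma) (Msub rho sigma)))).

Definition QSCM (n : nat) (rho : Mat) : R :=
  / log2 (INR n) * vN_entropy n rho * trace_dist n rho (maxmixed n).

(** The functional calculus of a Hermitian matrix only sees its spectrum: if
    [A = U diag(lam) U^*] then [Tr f(A) = sum_i f(lam_i)], whichever unitary
    diagonalisation is used.  The spectrum of [rho^(x)n] consists of the
    products [lam_i1 ... lam_in] of eigenvalues of [rho].  Hence, with
    [eta(t) = - t log2 t], the identity [eta(x y) = x eta(y) + y eta(x)] makes
    the entropy additive, [S(rho^(x)n) = n S(rho)], while the inequality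
    [|x y - a b| <= |x - a| y + a |y - b|] makes the l1-distance of the spectrum
    to the uniform distribution subadditive, [D(rho^(x)n) <= n D(rho)].  Since
    [log2 (N^n) = n log2 N], the factor [n] of the entropy cancels against the
    normalisation and [C(rho^(x)n) <= n C(rho)]. *)

From Stdlib Require Import Reals Lra Lia ClassicalEpsilon FunctionalExtensionality.
From Pilot Require Import Defs.
From mathcomp Require ssreflect ssrfun ssrbool eqtype ssrnat fintype bigop ssralg zmodp ssrnum
  matrix sesquilinear spectral complex Rstruct.
Open Scope R_scope.

Lemma Ceq (a b : C) : Cre a = Cre b -> Cim a = Cim b -> a = b.
Proof. destruct a, b; simpl; intros; subst; reflexivity. Qed.

Ltac Csimpl := unfold Cadd, Cmul, Copp, Cconj, C0, C1, RtoC in *; simpl in *.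
Ltac Csolve := intros; apply Ceq; Csimpl; ring.

Lemma Cmul_comm a b : Cmul a b = Cmul b a. Proof. Csolve. Qed.
Lemma Cmul_assoc a b c : Cmul (Cmul a b) c = Cmul a (Cmul b c). Proof. Csolve. Qed.
Lemma Cmul_0_l a : Cmul C0 a = C0. Proof. Csolve. Qed.
Lemma Cmul_0_r a : Cmul a C0 = C0. Proof. Csolve. Qed.
Lemma Cmul_1_l a : Cmul C1 a = a. Proof. Csolve. Qed.
Lemma Cmul_1_r a : Cmul a C1 = a. Proof. Csolve. Qed.
Lemma Cconj_add a b : Cconj (Cadd a b) = Cadd (Cconj a) (Cconj b). Proof. Csolve. Qed.
Lemma Cconj_mul a b : Cconj (Cmul a b) = Cmul (Cconj a) (Cconj b). Proof. Csolve. Qed.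
Lemma Cconj_conj a : Cconj (Cconj a) = a. Proof. Csolve. Qed.

Definition cnorm2 (a : C) : R := Cre a * Cre a + Cim a * Cim a.

Lemma cnorm2_conj a : cnorm2 (Cconj a) = cnorm2 a.
Proof. unfold cnorm2; Csimpl; ring. Qed.

Lemma Re_mul_conj a : Cre (Cmul a (Cconj a)) = cnorm2 a.
Proof. unfold cnorm2; Csimpl; ring. Qed.

Lemma Cmul_real_comm c x y :
  Cmul c (RtoC x) = Cmul (RtoC y) c -> cnorm2 c = 0 \/ x = y.
Proof.
  destruct c as [a b]; unfold cnorm2; Csimpl; intros H.
  injection H; intros Him Hre.
  assert (Hxy : (x - y) * (a * a + b * b) = 0).
  { replace ((x - y) * (a * a + b * b))
      with (a * (a * x - b * 0 - (y * a - 0 * b)) + b * (a * 0 + b * x - (y * b + 0 * a)))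
      by ring.
    rewrite Hre, Him. ring. }
  apply Rmult_integral in Hxy as [Hxy|Hxy]; [right; lra|left; exact Hxy].
Qed.

Lemma Csum_ext n f g : (forall i, (i < n)%nat -> f i = g i) -> Csum n f = Csum n g.
Proof.
  induction n; simpl; intros H; [reflexivity|].
  rewrite IHn by (intros; apply H; lia). rewrite H by lia. reflexivity.
Qed.

Lemma Csum_add n f g : Csum n (fun i => Cadd (f i) (g i)) = Cadd (Csum n f) (Csum n g).
Proof.
  induction n; simpl; [Csolve|]. rewrite IHn.
  generalize (Csum n f) (Csum n g) (f n) (g n). Csolve.
Qed.

Lemma Csum_mul_l n c f : Csum n (fun i => Cmul c (f i)) = Cmul c (Csum n f).
Proof.
  induction n; simpl; [Csolve|]. rewrite IHn. generalize (Csum n f) (f n). Csolve.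
Qed.

Lemma Csum_mul_r n c f : Csum n (fun i => Cmul (f i) c) = Cmul (Csum n f) c.
Proof.
  induction n; simpl; [Csolve|]. rewrite IHn. generalize (Csum n f) (f n). Csolve.
Qed.

Lemma Csum_conj n f : Cconj (Csum n f) = Csum n (fun i => Cconj (f i)).
Proof. induction n; simpl; [Csolve|]. rewrite <- IHn. apply Cconj_add. Qed.

Lemma Csum_zero n f : (forall i, (i < n)%nat -> f i = C0) -> Csum n f = C0.
Proof.
  induction n; simpl; intros H; [reflexivity|].
  rewrite IHn by (intros; apply H; lia). rewrite H by lia. Csolve.
Qed.

Lemma Csum_swap m n f :
  Csum m (fun i => Csum n (fun j => f i j)) = Csum n (fun j => Csum m (fun i => f i j)).
Proof.
  induction m; simpl.
  - symmetry. apply Csum_zero. reflexivity.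
  - rewrite IHm, <- Csum_add. reflexivity.
Qed.

Lemma Csum_app p q f : Csum (p + q) f = Cadd (Csum p f) (Csum q (fun b => f (p + b)%nat)).
Proof.
  induction q; simpl.
  - rewrite Nat.add_0_r. Csolve.
  - rewrite Nat.add_succ_r. simpl. rewrite IHq. Csolve.
Qed.

Lemma Csum_split m n f :
  Csum (m * n) f = Csum m (fun a => Csum n (fun b => f (a * n + b)%nat)).
Proof.
  induction m; simpl; [reflexivity|].
  replace (n + m * n)%nat with (m * n + n)%nat by lia.
  rewrite Csum_app, IHm. reflexivity.
Qed.

Lemma Csum_delta n k f : (k < n)%nat ->
  Csum n (fun i => if Nat.eqb i k then f i else C0) = f k.
Proof.
  induction n; intros Hk; [lia|]. simpl.
  destruct (Nat.eq_dec k n).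
  - subst. rewrite Nat.eqb_refl, Csum_zero; [Csolve|].
    intros i Hi. destruct (Nat.eqb_spec i n); [lia|reflexivity].
  - rewrite IHn by lia. destruct (Nat.eqb_spec n k); [lia|]. Csolve.
Qed.

Lemma Csum_delta_sym n k f : (k < n)%nat ->
  Csum n (fun i => if Nat.eqb k i then f i else C0) = f k.
Proof.
  intros Hk. rewrite <- (Csum_delta n k f Hk). apply Csum_ext; intros i _.
  rewrite Nat.eqb_sym. reflexivity.
Qed.

Fixpoint Rsum (n : nat) (f : nat -> R) : R :=
  match n with O => 0 | S k => Rsum k f + f k end.

Lemma Rsum_ext n f g : (forall i, (i < n)%nat -> f i = g i) -> Rsum n f = Rsum n g.
Proof.
  induction n; simpl; intros H; [reflexivity|].
  rewrite IHn by (intros; apply H; lia). rewrite H by lia. reflexivity.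
Qed.

Lemma Re_Csum n f : Cre (Csum n f) = Rsum n (fun i => Cre (f i)).
Proof. induction n; simpl; [reflexivity|]. rewrite IHn. reflexivity. Qed.

Lemma Rsum_add n f g : Rsum n (fun i => f i + g i) = Rsum n f + Rsum n g.
Proof. induction n; simpl; [ring|]. rewrite IHn. ring. Qed.

Lemma Rsum_scal_l n c f : Rsum n (fun i => c * f i) = c * Rsum n f.
Proof. induction n; simpl; [ring|]. rewrite IHn. ring. Qed.

Lemma Rsum_scal_r n c f : Rsum n (fun i => f i * c) = Rsum n f * c.
Proof. induction n; simpl; [ring|]. rewrite IHn. ring. Qed.

Lemma Rsum_const n c : Rsum n (fun _ => c) = INR n * c.
Proof. induction n; simpl Rsum; [simpl; ring|]. rewrite IHn, S_INR. ring. Qed.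

Lemma Rsum_le n f g : (forall i, (i < n)%nat -> f i <= g i) -> Rsum n f <= Rsum n g.
Proof.
  induction n; simpl; intros H; [lra|].
  assert (Rsum n f <= Rsum n g) by (apply IHn; intros; apply H; lia).
  assert (f n <= g n) by (apply H; lia). lra.
Qed.

Lemma Rsum_nonneg n f : (forall i, (i < n)%nat -> 0 <= f i) -> 0 <= Rsum n f.
Proof.
  intros H. apply Rle_trans with (Rsum n (fun _ => 0)).
  - rewrite Rsum_const. lra.
  - apply Rsum_le. exact H.
Qed.

Lemma Rsum_term_le n f k :
  (forall i, (i < n)%nat -> 0 <= f i) -> (k < n)%nat -> f k <= Rsum n f.
Proof.
  induction n; intros H Hk; [lia|]. simpl.
  assert (0 <= Rsum n f) by (apply Rsum_nonneg; intros; apply H; lia).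
  destruct (Nat.eq_dec k n) as [->|]; [lra|].
  assert (f k <= Rsum n f) by (apply IHn; [intros; apply H; lia|lia]).
  assert (0 <= f n) by (apply H; lia). lra.
Qed.

Lemma Rsum_app p q f : Rsum (p + q) f = Rsum p f + Rsum q (fun b => f (p + b)%nat).
Proof.
  induction q; simpl.
  - rewrite Nat.add_0_r. ring.
  - rewrite Nat.add_succ_r. simpl. rewrite IHq. ring.
Qed.

Lemma Rsum_split m n f :
  Rsum (m * n) f = Rsum m (fun a => Rsum n (fun b => f (a * n + b)%nat)).
Proof.
  induction m; simpl; [reflexivity|].
  replace (n + m * n)%nat with (m * n + n)%nat by lia.
  rewrite Rsum_app, IHm. reflexivity.
Qed.

Lemma Rsum_swap m n f :
  Rsum m (fun i => Rsum n (fun j => f i j)) = Rsum n (fun j => Rsum m (fun i => f i j)).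
Proof.
  induction m; simpl.
  - rewrite Rsum_const. ring.
  - rewrite IHm, <- Rsum_add. reflexivity.
Qed.

Lemma doubly_stochastic_Rsum_eq n (w : nat -> nat -> R) (a b : nat -> R) :
  (forall i, (i < n)%nat -> Rsum n (fun j => w i j) = 1) ->
  (forall j, (j < n)%nat -> Rsum n (fun i => w i j) = 1) ->
  (forall i j, (i < n)%nat -> (j < n)%nat -> w i j * a i = w i j * b j) ->
  Rsum n a = Rsum n b.
Proof.
  intros Hrow Hcol Hw.
  transitivity (Rsum n (fun i => Rsum n (fun j => w i j * b j))).
  - apply Rsum_ext; intros i Hi.
    rewrite (Rsum_ext n _ (fun j => w i j * a i)) by (intros; symmetry; apply Hw; assumption).
    rewrite Rsum_scal_r, Hrow by assumption. ring.
  - rewrite Rsum_swap. apply Rsum_ext; intros j Hj.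
    rewrite Rsum_scal_r, Hcol by assumption. ring.
Qed.

Lemma Mmul_assoc n A B D : Mmul n (Mmul n A B) D = Mmul n A (Mmul n B D).
Proof.
  apply functional_extensionality; intro i; apply functional_extensionality; intro j.
  unfold Mmul.
  transitivity (Csum n (fun k => Csum n (fun l => Cmul (A i l) (Cmul (B l k) (D k j))))).
  - apply Csum_ext; intros k _. rewrite <- Csum_mul_r. apply Csum_ext; intros l _.
    apply Cmul_assoc.
  - rewrite Csum_swap. apply Csum_ext; intros l _. rewrite <- Csum_mul_l. reflexivity.
Qed.

Lemma Meq_refl n A : Meq n A A.
Proof. intros i j _ _; reflexivity. Qed.

Lemma Meq_trans n A B D : Meq n A B -> Meq n B D -> Meq n A D.
Proof. intros H1 H2 i j Hi Hj; rewrite H1; auto. Qed.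

Lemma Meq_mul n A A' B B' : Meq n A A' -> Meq n B B' -> Meq n (Mmul n A B) (Mmul n A' B').
Proof.
  intros H1 H2 i j Hi Hj. unfold Mmul. apply Csum_ext; intros k Hk.
  rewrite H1, H2 by assumption. reflexivity.
Qed.

Lemma Meq_mul_l n A B B' : Meq n B B' -> Meq n (Mmul n A B) (Mmul n A B').
Proof. intros; apply Meq_mul; [apply Meq_refl|assumption]. Qed.

Lemma Meq_mul_r n A A' B : Meq n A A' -> Meq n (Mmul n A B) (Mmul n A' B).
Proof. intros; apply Meq_mul; [assumption|apply Meq_refl]. Qed.

Lemma Mtrace_Meq n A B : Meq n A B -> Mtrace n A = Mtrace n B.
Proof. intros H. unfold Mtrace. apply Csum_ext; intros; apply H; auto. Qed.

Lemma Madj_mul n A B : Madj (Mmul n A B) = Mmul n (Madj B) (Madj A).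
Proof.
  apply functional_extensionality; intro i; apply functional_extensionality; intro j.
  unfold Madj, Mmul. rewrite Csum_conj. apply Csum_ext; intros k _.
  rewrite Cconj_mul, Cmul_comm. reflexivity.
Qed.

Lemma Madj_adj A : Madj (Madj A) = A.
Proof.
  apply functional_extensionality; intro i; apply functional_extensionality; intro j.
  unfold Madj. apply Cconj_conj.
Qed.

Lemma Mmul_id_l n A : Meq n (Mmul n Mid A) A.
Proof.
  intros i j Hi Hj. unfold Mmul, Mid.
  rewrite <- (Csum_delta_sym n i (fun k => A k j) Hi). apply Csum_ext; intros k _.
  destruct (Nat.eqb i k); [apply Cmul_1_l|apply Cmul_0_l].
Qed.

Lemma Mmul_id_r n A : Meq n (Mmul n A Mid) A.
Proof.
  intros i j Hi Hj. unfold Mmul, Mid.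
  rewrite <- (Csum_delta n j (fun k => A i k) Hj). apply Csum_ext; intros k _.
  destruct (Nat.eqb k j); [apply Cmul_1_r|apply Cmul_0_r].
Qed.

Lemma Mmul_diag_r n W lam i j :
  (j < n)%nat -> Mmul n W (Mdiag lam) i j = Cmul (W i j) (RtoC (lam j)).
Proof.
  intros Hj. unfold Mmul, Mdiag.
  rewrite <- (Csum_delta n j (fun k => Cmul (W i k) (RtoC (lam k))) Hj).
  apply Csum_ext; intros k _. destruct (Nat.eqb k j); [reflexivity|apply Cmul_0_r].
Qed.

Lemma Mmul_diag_l n W lam i j :
  (i < n)%nat -> Mmul n (Mdiag lam) W i j = Cmul (RtoC (lam i)) (W i j).
Proof.
  intros Hi. unfold Mmul, Mdiag.
  rewrite <- (Csum_delta_sym n i (fun k => Cmul (RtoC (lam k)) (W k j)) Hi).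
  apply Csum_ext; intros k _. destruct (Nat.eqb_spec i k); [subst; reflexivity|apply Cmul_0_l].
Qed.

Lemma Mmul_cancel_l n X Y Z : Meq n (Mmul n X Y) Mid -> Meq n (Mmul n X (Mmul n Y Z)) Z.
Proof.
  intros H. rewrite <- Mmul_assoc. eapply Meq_trans; [apply Meq_mul_r; exact H|].
  apply Mmul_id_l.
Qed.

Lemma unitary_adj n U : unitary n U -> unitary n (Madj U).
Proof. intros [H1 H2]. split; rewrite Madj_adj; assumption. Qed.

Lemma unitary_mul n U V : unitary n U -> unitary n V -> unitary n (Mmul n U V).
Proof.
  intros [HU1 HU2] [HV1 HV2]. unfold unitary. rewrite Madj_mul. split; rewrite Mmul_assoc.
  - eapply Meq_trans; [apply Meq_mul_l, Mmul_cancel_l, HU1|exact HV1].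
  - eapply Meq_trans; [apply Meq_mul_l, Mmul_cancel_l, HV2|exact HU2].
Qed.

Lemma unitary_row_norm n W i :
  unitary n W -> (i < n)%nat -> Rsum n (fun j => cnorm2 (W i j)) = 1.
Proof.
  intros [_ HW] Hi. specialize (HW i i Hi Hi).
  unfold Mid in HW. rewrite Nat.eqb_refl in HW. apply (f_equal Cre) in HW.
  unfold Mmul, Madj in HW. rewrite Re_Csum in HW. change (Cre C1) with 1 in HW.
  rewrite <- HW.
  apply Rsum_ext; intros j _. symmetry. apply Re_mul_conj.
Qed.

Lemma unitary_col_norm n W j :
  unitary n W -> (j < n)%nat -> Rsum n (fun i => cnorm2 (W i j)) = 1.
Proof.
  intros HW Hj. rewrite <- (unitary_row_norm n (Madj W) j (unitary_adj n W HW) Hj).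
  apply Rsum_ext; intros i _. unfold Madj. symmetry. apply cnorm2_conj.
Qed.

(** * Spectral decompositions and the functional calculus *)

Definition spectral_decomp (n : nat) (A U : Mat) (lam : nat -> R) : Prop :=
  unitary n U /\ Meq n A (Mmul n (Mmul n U (Mdiag lam)) (Madj U)).

Lemma UDU_entry n U lam i j :
  Mmul n (Mmul n U (Mdiag lam)) (Madj U) i j =
  Csum n (fun k => Cmul (Cmul (U i k) (RtoC (lam k))) (Cconj (U j k))).
Proof.
  unfold Mmul at 1. apply Csum_ext; intros k Hk. rewrite Mmul_diag_r by exact Hk.
  reflexivity.
Qed.

Lemma Re_trace_UDU n U lam : unitary n U ->
  Cre (Mtrace n (Mmul n (Mmul n U (Mdiag lam)) (Madj U))) = Rsum n lam.
Proof.
  intros [HU _]. unfold Mtrace.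
  rewrite (Csum_ext n _ (fun i => Csum n (fun k =>
             Cmul (RtoC (lam k)) (Cmul (Cconj (U i k)) (U i k)))))
    by (intros i _; rewrite UDU_entry; apply Csum_ext; intros k _; Csolve).
  rewrite Csum_swap, Re_Csum. apply Rsum_ext; intros k Hk.
  rewrite Csum_mul_l. change (Csum n _) with (Mmul n (Madj U) U k k).
  rewrite HU by assumption. unfold Mid. rewrite Nat.eqb_refl. Csimpl. ring.
Qed.

Lemma spectral_decomp_intertwine n A U lam V mu :
  spectral_decomp n A U lam -> spectral_decomp n A V mu ->
  forall i j, (i < n)%nat -> (j < n)%nat ->
  Cmul (Mmul n (Madj V) U i j) (RtoC (lam j)) = Cmul (RtoC (mu i)) (Mmul n (Madj V) U i j).
Proof.
  intros [[HU1 _] HA] [[HV1 _] HB] i j Hi Hj.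
  set (X := Mmul n (Mmul n (Madj V) A) U).
  assert (XU : Meq n X (Mmul n (Mmul n (Madj V) U) (Mdiag lam))).
  { unfold X. eapply Meq_trans; [apply Meq_mul_r, Meq_mul_l, HA|].
    rewrite !Mmul_assoc. apply Meq_mul_l, Meq_mul_l.
    eapply Meq_trans; [apply Meq_mul_l, HU1|apply Mmul_id_r]. }
  assert (XV : Meq n X (Mmul n (Mdiag mu) (Mmul n (Madj V) U))).
  { unfold X. eapply Meq_trans; [apply Meq_mul_r, Meq_mul_l, HB|].
    rewrite !Mmul_assoc. apply Mmul_cancel_l, HV1. }
  rewrite <- (Mmul_diag_r n _ lam i j Hj), <- (Mmul_diag_l n _ mu i j Hi).
  rewrite <- XU, <- XV by assumption. reflexivity.
Qed.

(* The moduli [|(V^* U)_ij|^2] form a doubly stochastic matrix supported where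
   [lam_j = mu_i]. *)
Lemma spectral_decomp_Rsum_unique n A U lam V mu (f : R -> R) :
  spectral_decomp n A U lam -> spectral_decomp n A V mu ->
  Rsum n (fun i => f (lam i)) = Rsum n (fun i => f (mu i)).
Proof.
  intros HsU HsV.
  set (W := Mmul n (Madj V) U).
  assert (HW : unitary n W)
    by (apply unitary_mul; [apply unitary_adj, (proj1 HsV)|apply (proj1 HsU)]).
  symmetry. apply (doubly_stochastic_Rsum_eq n (fun i j => cnorm2 (W i j))).
  - intros i Hi. apply unitary_row_norm; assumption.
  - intros j Hj. apply unitary_col_norm; assumption.
  - intros i j Hi Hj.
    destruct (Cmul_real_comm _ _ _ (spectral_decomp_intertwine n A U lam V mu HsU HsV i j Hi Hj))
      as [H0|Heq].
    + unfold W. rewrite H0. ring.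
    + rewrite Heq. reflexivity.
Qed.

Lemma Re_trace_mfun n f A U lam : spectral_decomp n A U lam ->
  Cre (Mtrace n (mfun n f A)) = Rsum n (fun i => f (lam i)).
Proof.
  intros Hs.
  assert (Hex : exists B, is_mfun n f A B).
  { exists (Mmul n (Mmul n U (Mdiag (fun i => f (lam i)))) (Madj U)), U, lam.
    destruct Hs as [HU HA]. split; [exact HU|split; [exact HA|apply Meq_refl]]. }
  destruct (epsilon_spec (inhabits Mid) (fun B => is_mfun n f A B) Hex)
    as [V [mu [HV [HA HB]]]].
  fold (mfun n f A) in HB.
  rewrite (Mtrace_Meq _ _ _ HB), Re_trace_UDU by assumption.
  symmetry. apply (spectral_decomp_Rsum_unique n A U lam V mu f Hs). split; assumption.
Qed.

Lemma spectral_decomp_sub_scalar n A U lam c : spectral_decomp n A U lam ->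
  spectral_decomp n (Msub A (Mscale (RtoC c) Mid)) U (fun i => lam i - c).
Proof.
  intros [[HU1 HU2] HA]. split; [split; assumption|].
  intros i j Hi Hj. unfold Msub, Mscale. rewrite HA, !UDU_entry by assumption.
  rewrite (Csum_ext n (fun k => Cmul (Cmul (U i k) (RtoC (lam k - c))) (Cconj (U j k)))
     (fun k => Cadd (Cmul (Cmul (U i k) (RtoC (lam k))) (Cconj (U j k)))
                    (Cmul (RtoC (- c)) (Cmul (U i k) (Cconj (U j k))))))
    by (intros k _; generalize (U i k) (Cconj (U j k)); Csolve).
  rewrite Csum_add, Csum_mul_l, <- (HU2 i j Hi Hj). unfold Mmul, Madj.
  generalize (Csum n (fun k => Cmul (Cmul (U i k) (RtoC (lam k))) (Cconj (U j k))))
             (Csum n (fun k => Cmul (U i k) (Cconj (U j k)))).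
  Csolve.
Qed.

Lemma spectral_decomp_sq n A U lam : spectral_decomp n A U lam ->
  spectral_decomp n (Mmul n A A) U (fun i => lam i * lam i).
Proof.
  intros [[HU1 HU2] HA]. split; [split; assumption|].
  eapply Meq_trans; [apply Meq_mul; exact HA|].
  rewrite !Mmul_assoc. apply Meq_mul_l.
  eapply Meq_trans; [apply Meq_mul_l, Mmul_cancel_l, HU1|].
  rewrite <- Mmul_assoc. apply Meq_mul_r.
  intros i j Hi Hj. rewrite Mmul_diag_l by assumption. unfold Mdiag.
  destruct (Nat.eqb_spec i j); [subst; Csolve|apply Cmul_0_r].
Qed.

Lemma density_spectrum n rho U lam : density n rho -> spectral_decomp n rho U lam ->
  (forall i, (i < n)%nat -> 0 <= lam i) /\ Rsum n lam = 1.
Proof.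
  intros [_ [Hpos Htr]] [[HU1 HU2] HA]. split.
  - intros k Hk. specialize (Hpos (fun i => U i k)). simpl in Hpos.
    assert (E : Meq n (Mmul n (Mmul n (Madj U) rho) U) (Mdiag lam)).
    { eapply Meq_trans; [apply Meq_mul_r, Meq_mul_l, HA|].
      rewrite !Mmul_assoc. eapply Meq_trans; [apply Mmul_cancel_l, HU1|].
      eapply Meq_trans; [apply Meq_mul_l, HU1|apply Mmul_id_r]. }
    specialize (E k k Hk Hk). unfold Mdiag in E. rewrite Nat.eqb_refl in E.
    change (lam k) with (Cre (RtoC (lam k))). rewrite <- E.
    replace (Mmul n (Mmul n (Madj U) rho) U k k) with
      (Csum n (fun i => Csum n (fun j => Cmul (Cconj (U i k)) (Cmul (rho i j) (U j k)))));
      [exact Hpos|].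
    unfold Mmul, Madj. rewrite Csum_swap. apply Csum_ext; intros j _.
    rewrite <- Csum_mul_r. apply Csum_ext; intros i _. symmetry; apply Cmul_assoc.
  - rewrite (Mtrace_Meq _ _ _ HA) in Htr. apply (f_equal Cre) in Htr.
    rewrite Re_trace_UDU in Htr by (split; assumption). exact Htr.
Qed.

(** * Kronecker products and tensor powers *)

Lemma divmod_div n a b : (b < n)%nat -> ((a * n + b) / n)%nat = a.
Proof. intros. symmetry. apply (Nat.div_unique _ _ _ b); lia. Qed.

Lemma divmod_mod n a b : (b < n)%nat -> ((a * n + b) mod n)%nat = b.
Proof. intros. symmetry. apply (Nat.mod_unique _ _ a); lia. Qed.

Lemma div_lt_mul m n i : (i < m * n)%nat -> (i / n < m)%nat.
Proof. intros. apply Nat.Div0.div_lt_upper_bound. lia. Qed.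

Lemma divmod_inj n i j : (0 < n)%nat ->
  (i / n = j / n)%nat -> (i mod n = j mod n)%nat -> i = j.
Proof.
  intros Hn H1 H2. rewrite (Nat.div_mod i n), (Nat.div_mod j n) by lia.
  rewrite H1, H2. reflexivity.
Qed.

Lemma kron_mixed m n A B D E : (0 < n)%nat ->
  Mmul (m * n) (kron n A B) (kron n D E) = kron n (Mmul m A D) (Mmul n B E).
Proof.
  intros Hn.
  apply functional_extensionality; intro i; apply functional_extensionality; intro j.
  unfold Mmul at 1. rewrite Csum_split. unfold kron at 3. unfold Mmul.
  rewrite <- Csum_mul_r. apply Csum_ext; intros a _. rewrite <- Csum_mul_l.
  apply Csum_ext; intros b Hb. unfold kron. rewrite divmod_div, divmod_mod by assumption.
  generalize (A (i / n)%nat a) (B (i mod n)%nat b) (D a (j / n)%nat) (E b (j mod n)%nat).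
  Csolve.
Qed.

Lemma Madj_kron n A B : Madj (kron n A B) = kron n (Madj A) (Madj B).
Proof.
  apply functional_extensionality; intro i; apply functional_extensionality; intro j.
  unfold Madj, kron. apply Cconj_mul.
Qed.

Lemma kron_Meq m n A A' B B' : (0 < n)%nat -> Meq m A A' -> Meq n B B' ->
  Meq (m * n) (kron n A B) (kron n A' B').
Proof.
  intros Hn H1 H2 i j Hi Hj. unfold kron.
  rewrite H1 by (apply div_lt_mul; assumption).
  rewrite H2 by (apply Nat.mod_upper_bound; lia). reflexivity.
Qed.

Lemma kron_diag n a b : (0 < n)%nat ->
  kron n (Mdiag a) (Mdiag b) = Mdiag (fun i => a (i / n)%nat * b (i mod n)%nat).
Proof.
  intros Hn.
  apply functional_extensionality; intro i; apply functional_extensionality; intro j.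
  unfold kron, Mdiag.
  destruct (Nat.eqb_spec i j) as [->|Hij].
  - rewrite !Nat.eqb_refl. Csolve.
  - destruct (Nat.eqb_spec (i / n) (j / n)); destruct (Nat.eqb_spec (i mod n) (j mod n));
      try apply Cmul_0_l; try apply Cmul_0_r.
    exfalso. apply Hij. apply (divmod_inj n); assumption.
Qed.

Lemma kron_id n : (0 < n)%nat -> kron n Mid Mid = Mid.
Proof.
  intros Hn. replace Mid with (Mdiag (fun _ => 1)) by reflexivity.
  rewrite kron_diag by exact Hn. f_equal. extensionality i. ring.
Qed.

Lemma kron_unitary m n U V : (0 < n)%nat ->
  unitary m U -> unitary n V -> unitary (m * n) (kron n U V).
Proof.
  intros Hn [H1 H2] [H3 H4].
  split; rewrite Madj_kron, kron_mixed, <- (kron_id n Hn) by exact Hn;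
    apply kron_Meq; assumption.
Qed.

Lemma kron_spectral_decomp m n A B U V lam mu : (0 < n)%nat ->
  spectral_decomp m A U lam -> spectral_decomp n B V mu ->
  spectral_decomp (m * n) (kron n A B) (kron n U V)
    (fun i => lam (i / n)%nat * mu (i mod n)%nat).
Proof.
  intros Hn [HU HA] [HV HB]. split.
  - apply kron_unitary; assumption.
  - rewrite <- kron_diag, Madj_kron, !kron_mixed by assumption.
    apply kron_Meq; assumption.
Qed.

(* Eigenvalue [i] of [tpow N k rho] is the product of [lam d] over the base-[N]
   digits [d] of [i]. *)
Fixpoint tpow_spectrum (N : nat) (lam : nat -> R) (k : nat) : nat -> R :=
  match k with
  | O => fun _ => 1
  | S k' => fun i => tpow_spectrum N lam k' (i / N)%nat * lam (i mod N)%nat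
  end.

Lemma pow_succ_mul N k : (N ^ S k = N ^ k * N)%nat.
Proof. simpl. apply Nat.mul_comm. Qed.

Lemma tpow_spectral_decomp N rho U lam k : (0 < N)%nat ->
  spectral_decomp N rho U lam ->
  exists W, spectral_decomp (N ^ k) (tpow N k rho) W (tpow_spectrum N lam k).
Proof.
  intros HN Hs. induction k as [|k [W HW]].
  - exists Mid. split; [split|];
      intros i j Hi Hj; simpl in Hi, Hj; replace i with 0%nat by lia;
      replace j with 0%nat by lia; unfold Mmul, Madj, Mid, Mdiag; simpl; Csolve.
  - exists (kron N W U). rewrite pow_succ_mul.
    apply (kron_spectral_decomp (N ^ k) N _ _ W U (tpow_spectrum N lam k) lam); assumption.
Qed.

(** * Entropy and distance to uniform of product distributions *)

Lemma eta_0 : eta 0 = 0.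
Proof. unfold eta. destruct (Req_EM_T 0 0); [reflexivity|congruence]. Qed.

Lemma eta_1 : eta 1 = 0.
Proof.
  unfold eta, log2. destruct (Req_EM_T 1 0); [lra|]. rewrite ln_1. unfold Rdiv. ring.
Qed.

Lemma eta_mul x y : 0 <= x -> 0 <= y -> eta (x * y) = x * eta y + y * eta x.
Proof.
  intros Hx Hy.
  destruct (Req_dec x 0) as [->|Hx0]; [rewrite Rmult_0_l, eta_0; ring|].
  destruct (Req_dec y 0) as [->|Hy0]; [rewrite Rmult_0_r, eta_0; ring|].
  assert (Hxy : x * y <> 0) by (apply Rmult_integral_contrapositive; tauto).
  unfold eta. destruct (Req_EM_T (x * y) 0); [contradiction|].
  destruct (Req_EM_T x 0); [contradiction|]. destruct (Req_EM_T y 0); [contradiction|].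
  unfold log2. rewrite ln_mult by lra. unfold Rdiv. ring.
Qed.

Lemma ln_2_pos : 0 < ln 2.
Proof. rewrite <- ln_1. apply ln_increasing; lra. Qed.

Lemma eta_nonneg x : 0 <= x <= 1 -> 0 <= eta x.
Proof.
  intros [H0 H1]. unfold eta. destruct (Req_EM_T x 0); [lra|].
  assert (Hl : ln x <= 0).
  { destruct (Req_dec x 1) as [->|]; [rewrite ln_1; lra|].
    rewrite <- ln_1. left. apply ln_increasing; lra. }
  pose proof ln_2_pos.
  assert (0 < / ln 2) by (apply Rinv_0_lt_compat; lra).
  unfold log2, Rdiv. assert (ln x * / ln 2 <= 0) by nra. nra.
Qed.

Lemma Rabs_mul_sub_le x y c d : 0 <= y -> 0 <= c ->
  Rabs (x * y - c * d) <= Rabs (x - c) * y + c * Rabs (y - d).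
Proof.
  intros Hy Hc.
  replace (x * y - c * d) with ((x - c) * y + c * (y - d)) by ring.
  eapply Rle_trans; [apply Rabs_triang|].
  rewrite !Rabs_mult, (Rabs_right y), (Rabs_right c) by lra. lra.
Qed.

Section ProductDistribution.

Variables (N : nat) (lam : nat -> R).
Hypothesis N_gt0 : (0 < N)%nat.
Hypothesis lam_ge0 : forall i, (i < N)%nat -> 0 <= lam i.
Hypothesis lam_sum1 : Rsum N lam = 1.

Lemma Rsum_pow_succ k f :
  Rsum (N ^ S k) f = Rsum (N ^ k) (fun a => Rsum N (fun b => f (a * N + b)%nat)).
Proof. rewrite pow_succ_mul. apply Rsum_split. Qed.

Lemma tpow_spectrum_digits k a b : (b < N)%nat ->
  tpow_spectrum N lam (S k) (a * N + b) = tpow_spectrum N lam k a * lam b.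
Proof. intros Hb. simpl. rewrite divmod_div, divmod_mod by exact Hb. reflexivity. Qed.

Lemma tpow_spectrum_ge0 k i : (i < N ^ k)%nat -> 0 <= tpow_spectrum N lam k i.
Proof.
  revert i; induction k; intros i Hi; simpl; [lra|].
  apply Rmult_le_pos.
  - apply IHk, div_lt_mul. rewrite <- pow_succ_mul. exact Hi.
  - apply lam_ge0, Nat.mod_upper_bound. lia.
Qed.

Lemma tpow_spectrum_sum k : Rsum (N ^ k) (tpow_spectrum N lam k) = 1.
Proof.
  induction k; [simpl; ring|].
  rewrite Rsum_pow_succ, <- IHk. apply Rsum_ext; intros a Ha.
  rewrite (Rsum_ext N _ (fun b => tpow_spectrum N lam k a * lam b))
    by (intros; apply tpow_spectrum_digits; assumption).
  rewrite Rsum_scal_l, lam_sum1. ring.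
Qed.

Lemma tpow_spectrum_entropy k :
  Rsum (N ^ k) (fun i => eta (tpow_spectrum N lam k i))
  = INR k * Rsum N (fun i => eta (lam i)).
Proof.
  induction k; [simpl; rewrite eta_1; ring|].
  rewrite Rsum_pow_succ, S_INR.
  rewrite (Rsum_ext (N ^ k) _ (fun a => tpow_spectrum N lam k a * Rsum N (fun i => eta (lam i))
                                        + eta (tpow_spectrum N lam k a))).
  - rewrite Rsum_add, Rsum_scal_r, tpow_spectrum_sum, IHk. ring.
  - intros a Ha.
    rewrite (Rsum_ext N _ (fun b => tpow_spectrum N lam k a * eta (lam b)
                                     + lam b * eta (tpow_spectrum N lam k a))).
    + rewrite Rsum_add, Rsum_scal_l, Rsum_scal_r, lam_sum1. ring.
    + intros b Hb. rewrite tpow_spectrum_digits by exact Hb.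
      apply eta_mul; [apply tpow_spectrum_ge0; exact Ha|apply lam_ge0; exact Hb].
Qed.

Lemma INR_pow_pos k : 0 < INR (N ^ k).
Proof. apply lt_0_INR. apply Nat.neq_0_lt_0, Nat.pow_nonzero. lia. Qed.

Lemma tpow_spectrum_dist_le k :
  Rsum (N ^ k) (fun i => Rabs (tpow_spectrum N lam k i - / INR (N ^ k)))
  <= INR k * Rsum N (fun i => Rabs (lam i - / INR N)).
Proof.
  induction k.
  - simpl. rewrite Rinv_1, Rminus_diag, Rabs_R0. lra.
  - rewrite Rsum_pow_succ, S_INR.
    set (c := / INR (N ^ k)). set (D := Rsum N (fun i => Rabs (lam i - / INR N))).
    assert (Hc : 0 < c) by (apply Rinv_0_lt_compat, INR_pow_pos).
    replace (/ INR (N ^ S k)) with (c * / INR N)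
      by (rewrite pow_succ_mul, mult_INR, Rinv_mult; reflexivity).
    apply Rle_trans with (Rsum (N ^ k) (fun a => Rabs (tpow_spectrum N lam k a - c) + c * D)).
    + apply Rsum_le; intros a Ha.
      apply Rle_trans with (Rsum N (fun b => Rabs (tpow_spectrum N lam k a - c) * lam b
                                             + c * Rabs (lam b - / INR N))).
      * apply Rsum_le; intros b Hb. rewrite tpow_spectrum_digits by exact Hb.
        apply Rabs_mul_sub_le; [apply lam_ge0; exact Hb|lra].
      * rewrite Rsum_add, Rsum_scal_l, Rsum_scal_l, lam_sum1. unfold D. lra.
    + rewrite Rsum_add, Rsum_const.
      replace (INR (N ^ k) * (c * D)) with D
        by (unfold c; field; apply Rgt_not_eq, INR_pow_pos).
      fold c D in IHk. lra.
Qed.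

End ProductDistribution.

Lemma prob_entropy_ge0 n lam :
  (forall i, (i < n)%nat -> 0 <= lam i) -> Rsum n lam = 1 ->
  0 <= Rsum n (fun i => eta (lam i)).
Proof.
  intros H0 H1. apply Rsum_nonneg; intros i Hi. apply eta_nonneg.
  split; [apply H0; exact Hi|]. rewrite <- H1. apply Rsum_term_le; assumption.
Qed.

Lemma log2_pos x : 1 < x -> 0 < log2 x.
Proof.
  intros Hx. unfold log2, Rdiv. apply Rmult_lt_0_compat.
  - rewrite <- ln_1. apply ln_increasing; lra.
  - apply Rinv_0_lt_compat, ln_2_pos.
Qed.

Lemma log2_INR_pow N k : (0 < N)%nat -> log2 (INR (N ^ k)) = INR k * log2 (INR N).
Proof.
  intros HN. unfold log2. rewrite pow_INR, ln_pow by (apply lt_0_INR; exact HN).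
  unfold Rdiv. ring.
Qed.

(** * Existence of spectral decompositions *)

Module HermitianSpectral.
Import ssreflect ssrfun ssrbool eqtype ssrnat fintype bigop ssralg zmodp ssrnum matrix
  sesquilinear spectral complex Rstruct.
Import GRing.Theory Num.Theory.
Local Open Scope ring_scope.
Local Open Scope sesquilinear_scope.

Definition K := complex Rdefinitions.R.
Definition phi (a : Defs.C) : K := Complex (Cre a) (Cim a).
Definition psi (z : K) : Defs.C := mkC (complex.Re z) (complex.Im z).

Lemma phi_psi z : phi (psi z) = z. Proof. by case: z. Qed.
Lemma phi_inj a b : phi a = phi b -> a = b.
Proof. by case: a; case: b => ? ? ? ? [-> ->]. Qed.
Lemma phi_mul a b : phi (Cmul a b) = phi a * phi b. Proof. by []. Qed.
Lemma phi_conj a : phi (Cconj a) = (phi a)^*. Proof. by []. Qed.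
Lemma phi_real r : phi (RtoC r) = Complex r 0. Proof. by []. Qed.

Lemma phi_Csum n f : phi (Csum n f) = \sum_(k < n) phi (f k).
Proof. by elim: n => [|n IH]; rewrite ?big_ord0 // big_ord_recr /= -IH. Qed.

Lemma phi_Mid i j : phi (Mid i j) = (i == j)%:R.
Proof.
rewrite /Mid; case: (PeanoNat.Nat.eqb_spec i j) => [->|/eqP H]; first by rewrite eqxx.
by rewrite (negbTE H).
Qed.

Lemma hermitian_spectral_decomp n (A : Mat) :
  Meq n (Madj A) A -> exists U lam, spectral_decomp n A U lam.
Proof.
case: n => [|m] HA.
  by exists Mid, (fun _ => 0%R); split; [split|] => i j Hi; exfalso; lia.
pose M : 'M[K]_m.+1 := \matrix_(i, j) phi (A i j).
have Mherm : M \is hermsymmx.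
  apply/is_hermitianmxP; rewrite expr0 scale1r; apply/matrixP => i j.
  by rewrite !mxE -phi_conj; congr phi; symmetry; apply: (HA i j); apply/ltP.
have /orthomx_spectralP HM := hermitian_normalmx Mherm.
have Hreal := hermitian_spectral_diag_real Mherm.
set P := spectralmx M in HM; set d := spectral_diag M in HM Hreal.
have Pu : P \is unitarymx by exact: spectral_unitarymx.
rewrite invmx_unitary // in HM.
have PPt : P *m P ^t* = 1%:M by apply/unitarymxP.
have PtP : P ^t* *m P = 1%:M.
  by have := Pu; rewrite -trmxC_unitary => /unitarymxP; rewrite trmxCK.
have dr (k : 'I_m.+1) : Complex (complex.Re (d 0 k)) 0 = d 0 k.
  have /mxOverP /(_ 0 k) /CrealP := Hreal.
  by case: (d 0 k) => a b /= [] /eqP; rewrite eq_sym -addr_eq0 -mulr2n mulrn_eq0 /= => /eqP ->.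
(* [U] is the transpose-conjugate of MathComp's spectral basis [P], reindexed by [nat]. *)
pose U : Mat := fun i j => psi ((P (inord j) (inord i))^* ).
exists U, (fun k => complex.Re (d 0 (inord k))).
have Hord (F : 'I_m.+1 -> K) : \sum_(k < m.+1) F (inord k) = \sum_(k < m.+1) F k.
  by apply: eq_bigr => k _; rewrite inord_val.
have Hinj i j : (i < m.+1)%coq_nat -> (j < m.+1)%coq_nat ->
   ((inord i : 'I_m.+1) == inord j) = (i == j).
  move=> /ltP Hi /ltP Hj; apply/eqP/eqP => [/(congr1 val)|->//].
  by rewrite /= !inordK.
split; [split|] => i j Hi Hj; apply: phi_inj.
- rewrite phi_Csum phi_Mid -(Hinj _ _ Hi Hj).
  transitivity (\sum_(k < m.+1) P (inord i) k * (P (inord j) k)^* ).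
    rewrite -Hord; apply: eq_bigr => k _.
    by rewrite phi_mul phi_conj !phi_psi ?conjCK ?inord_val.
  have /matrixP /(_ (inord i) (inord j)) := PPt; rewrite !mxE => <-.
  by apply: eq_bigr => k _; rewrite !mxE.
- rewrite phi_Csum phi_Mid -(Hinj _ _ Hi Hj).
  transitivity (\sum_(k < m.+1) (P k (inord i))^* * P k (inord j)).
    rewrite -Hord; apply: eq_bigr => k _.
    by rewrite phi_mul phi_conj !phi_psi ?conjCK ?inord_val.
  have /matrixP /(_ (inord i) (inord j)) := PtP; rewrite !mxE => <-.
  by apply: eq_bigr => k _; rewrite !mxE.
- rewrite UDU_entry phi_Csum.
  have -> : phi (A i j) = M (inord i) (inord j) by rewrite mxE !inordK //; apply/ltP.
  rewrite HM -mulmxA mul_diag_mx mxE -Hord; apply: eq_bigr => k _.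
  by rewrite !mxE !phi_mul phi_conj phi_real !phi_psi !inord_val dr conjCK mulrA.
Qed.

End HermitianSpectral.

Lemma trace_dist_maxmixed n A U lam : spectral_decomp n A U lam ->
  trace_dist n A (maxmixed n) = / 2 * Rsum n (fun i => Rabs (lam i - / INR n)).
Proof.
  intros Hs. unfold trace_dist, maxmixed.
  rewrite (Re_trace_mfun n sqrt _ U (fun i => (lam i - / INR n) * (lam i - / INR n)))
    by (apply spectral_decomp_sq, spectral_decomp_sub_scalar, Hs).
  f_equal. apply Rsum_ext; intros i _. apply sqrt_Rsqr_abs.
Qed.

Lemma QSCM_spectrum n A U lam : spectral_decomp n A U lam ->
  QSCM n A = / log2 (INR n) * Rsum n (fun i => eta (lam i))
             * (/ 2 * Rsum n (fun i => Rabs (lam i - / INR n))).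
Proof.
  intros Hs. unfold QSCM, vN_entropy.
  rewrite (Re_trace_mfun _ _ _ _ _ Hs), (trace_dist_maxmixed _ _ _ _ Hs). reflexivity.
Qed.

Theorem mainTheorem3 (N n : nat) (rho : Mat) :
  (2 <= N)%nat -> (1 <= n)%nat -> density N rho ->
  QSCM (N ^ n) (tpow N n rho) <= INR n * QSCM N rho.
Proof.
  intros HN Hn Hd.
  assert (HN0 : (0 < N)%nat) by lia.
  destruct (HermitianSpectral.hermitian_spectral_decomp N rho (proj1 Hd)) as [U [lam Hs]].
  destruct (density_spectrum N rho U lam Hd Hs) as [Hl0 Hl1].
  destruct (tpow_spectral_decomp N rho U lam n HN0 Hs) as [W HW].
  rewrite (QSCM_spectrum _ _ _ _ Hs), (QSCM_spectrum _ _ _ _ HW).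
  rewrite log2_INR_pow, tpow_spectrum_entropy by assumption.
  pose proof (tpow_spectrum_dist_le N lam HN0 Hl0 Hl1 n) as HD.
  pose proof (prob_entropy_ge0 N lam Hl0 Hl1) as HS.
  assert (HL : 0 < log2 (INR N)) by (apply log2_pos, lt_1_INR; lia).
  assert (Hnpos : 0 < INR n) by (apply lt_0_INR; lia).
  set (S := Rsum N (fun i => eta (lam i))) in *.
  set (L := log2 (INR N)) in *.
  replace (/ (INR n * L) * (INR n * S)) with (/ L * S) by (field; lra).
  replace (INR n * (/ L * S * (/ 2 * Rsum N (fun i => Rabs (lam i - / INR N)))))
    with (/ L * S * (/ 2 * (INR n * Rsum N (fun i => Rabs (lam i - / INR N))))) by ring.
  apply Rmult_le_compat_l; [apply Rmult_le_pos; [left; apply Rinv_0_lt_compat|]; lra|].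
  lra.
Qed.
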